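(* Let $0<a_1<a_2<\cdots<a_n$ be task lengths and $A_{i:n}:=a_i+\cdots+a_n$. Let the disruption intensity be $\lambda(t)=\bar\lambda f(t)$ with $\bar\lambda>0$ and $f$ a positive differentiable function on $[0,\infty)$ with $f_-:=\inf_{t\ge0}f(t)>0$ and $f_+:=\sup_{t\ge0}f(t)<\infty$. Assume $\bar\lambda\le\frac{1}{2f_+a_n}$. Then for every $t\ge0$ and $i=1,\dots,n$, $$A_{i:n}\le M_{i:n}(t)\le A_{i:n}+\bar\lambda f_+(a_i^2+\cdots+a_n^2).$$ In particular, $M_{i:n}(t)\le\frac32A_{i:n}$.
   Context: Model: a single machine processes a finite batch of tasks one at a time in a fixed order. A task of length $c>0$ requires $c$ units of uninterrupted processing. Disruptions occur at the points of a non-homogeneous Poisson process on $[0,\infty)$ with intensity function $\lambda(t)$. If a disruption occurs while a task is being processed, all work on it is lost and that task is restarted from scratch at the disruption time (no repair time); a task is completed once it has been processed for $c$ consecutive time units with no disruption, and the machine then immediately starts the next task. $M_{i:n}(t)$ denotes the expected time, measured from $t$, to complete the tasks $a_i,a_{i+1},\dots,a_n$ in this order when processing of $a_i$ starts at time $t$. *)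

From HB Require Import structures.
From mathcomp Require Import all_boot all_order all_algebra.
From mathcomp Require Import all_classical all_reals all_analysis.
Set Implicit Arguments. Unset Strict Implicit. Unset Printing Implicit Defensive.
Import Order.TTheory GRing.Theory Num.Theory.
Import numFieldNormedType.Exports.
Local Open Scope classical_set_scope.
Local Open Scope ring_scope.

Definition pois_pmf {R : realType} (r : R) (k : nat) : R :=
  expR (- r) * r ^+ k / (k`!)%:R.

Definition cumint {R : realType} (lam : R -> R) (a b : R) : R :=
  Rintegral lebesgue_measure `[a, b] lam.

Definition count_eq {R : realType} (D : set R) (a b : R) (k : nat) : Prop :=
  exists s : seq R, [/\ uniq s, size s = k &
    forall x, x \in s <-> (D x /\ a <= x < b)].

(* D : T -> set R is (the set of points of) a non-homogeneous Poisson
   process on [0, +oo) with intensity function lam, under P: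
   all points lie in [0,+oo), and for any finitely many pairwise disjoint
   intervals [a_j, b_j) in [0,+oo) the counts N[a_j,b_j) are independent
   and Poisson distributed with means \int_{a_j}^{b_j} lam. *)
Definition is_NHPP {R : realType} {d : measure_display} {T : measurableType d}
    (P : probability T R) (D : T -> set R) (lam : R -> R) : Prop :=
  (forall w x, D w x -> 0 <= x) /\
  forall (m : nat) (a b : 'I_m -> R) (k : 'I_m -> nat),
    (forall j, 0 <= a j <= b j) ->
    (forall j l, j != l -> b j <= a l \/ b l <= a j) ->
    let E := \bigcap_(j in [set: 'I_m])
               [set w | count_eq (D w) (a j) (b j) (k j)] in
    measurable E /\
    P E = (\prod_(j < m) pois_pmf (cumint lam (a j) (b j)) (k j))%:E.

(* Completion time (absolute) of a task of length c started at time s,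
   given disruption set D (restart from scratch at every disruption):
   the first time u >= s + c such that no disruption lies in (u - c, u).
   +oo if there is no such time. *)
Definition task_end {R : realType} (D : set R) (c s : R) : \bar R :=
  ereal_inf [set u%:E | u in
    [set u : R | s + c <= u /\ forall x, D x -> ~ (u - c < x < u)]].

Definition seq_end {R : realType} (D : set R) (a : nat -> R) (i n : nat)
    (t : R) : \bar R :=
  foldl (fun x j => if x is EFin s then task_end D (a j) s else x)
        t%:E (iota i (n.+1 - i)).

Definition Mexp {R : realType} {d : measure_display} {T : measurableType d}
    (P : probability T R) (D : T -> set R) (a : nat -> R) (i n : nat)
    (t : R) : \bar R :=
  (\int[P]_w (seq_end (D w) a i n t - t%:E))%E.

(* The lower bound holds pathwise: each task occupies at least its length.
   For the upper bound, cut [t, +oo) into cells of width dl.  A cell is empty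
   (free of disruptions) with probability at least 1/u, u = expR (lam_max dl),
   and these events are independent.  Credit a task of length a_j only with runs
   of empty cells: it is surely finished after m_j = floor (a_j / dl) + 1
   consecutive empty cells.  The expected number of cells needed for a run of m
   successes is at most u (u^m - 1) / (u - 1); summing this potential over the
   pending tasks gives a superharmonic function of the cell chain, which bounds
   the expected number of cells within any horizon.  For dl small this potential
   is at most a_j + lam_max a_j^2 per task, and monotone convergence in the
   horizon bounds M_{i:n}(t).  Finally lam_max a_j <= 1/2 turns lam_max sum a_j^2
   into A/2. *)

From HB Require Import structures.
From mathcomp Require Import all_boot all_order all_algebra.
From mathcomp Require Import all_classical all_reals all_analysis.
From mathcomp Require Import ring lra measurable_realfun.
Set Implicit Arguments. Unset Strict Implicit. Unset Printing Implicit Defensive.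
Import Order.TTheory GRing.Theory Num.Theory.
Import numFieldNormedType.Exports.
Local Open Scope classical_set_scope.
Local Open Scope ring_scope.

Section IntegralFacts.
Local Open Scope ereal_scope.
Variables (d : measure_display) (T : measurableType d) (R : realType).
Variable mu : {measure set T -> \bar R}.

(* No measurability is needed (the completion time is never shown measurable):
   the integral of a nonnegative function is a supremum over simple functions. *)
Lemma ge0_le_integral_nomeas (A : set T) (f g : T -> \bar R) :
  (forall x, A x -> 0 <= f x) -> (forall x, A x -> f x <= g x) ->
  \int[mu]_(x in A) f x <= \int[mu]_(x in A) g x.
Proof.
move=> f0 fg.
rewrite !ge0_integralE //; last by move=> x Ax; apply: le_trans (f0 _ Ax) (fg _ Ax).
apply: ereal_sup_le => _ [h hf <-]; exists h => //= x.
apply: le_trans (hf x) _; rewrite /patch; case: ifP => // /set_mem; exact: fg.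
Qed.

Lemma ge0_integral_setID (A B : set T) (f : T -> R) :
  measurable A -> measurable B -> measurable_fun setT f -> (forall x, (0 <= f x)%R) ->
  \int[mu]_(x in A) (f x)%:E
  = \int[mu]_(x in A `&` B) (f x)%:E + \int[mu]_(x in A `\` B) (f x)%:E.
Proof.
move=> mA mB mf f0; rewrite -ge0_integral_setU //.
- by rewrite setUIDK.
- exact: measurableI.
- exact: measurableD.
- by apply: measurable_funTS; exact/measurable_EFinP.
- by move=> *; rewrite lee_fin.
- by rewrite disj_set2E; apply/eqP/seteqP; split => x // /= [[_ ?] [_ ?]].
Qed.

Lemma ge0_integral_1D (A : set T) (f : T -> R) :
  measurable A -> measurable_fun setT f -> (forall x, (0 <= f x)%R) ->
  \int[mu]_(x in A) (1 + f x)%:E = mu A + \int[mu]_(x in A) (f x)%:E.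
Proof.
move=> mA mf f0; under eq_integral do rewrite EFinD.
rewrite ge0_integralD //.
- by rewrite integral_cst // mul1e.
- by move=> *; rewrite lee_fin.
- by apply: measurable_funTS; exact/measurable_EFinP.
Qed.

End IntegralFacts.

Lemma cumint_ge0_le (R : realType) (lam : R -> R) (x y L : R) : x < y ->
  (forall s, x <= s <= y -> 0 <= lam s <= L) ->
  0 <= cumint lam x y <= L * (y - x).
Proof.
move=> xy hl; rewrite /cumint /Rintegral.
have I0 : (0 <= \int[lebesgue_measure]_(s in `[x, y]) (lam s)%:E)%E.
  apply: integral_ge0 => s; rewrite /= in_itv /= => /hl /andP[+ _].
  by rewrite lee_fin.
have IL : (\int[lebesgue_measure]_(s in `[x, y]) (lam s)%:E <= (L * (y - x))%:E)%E.
  apply: le_trans (ge0_le_integral_nomeas (g := fun=> L%:E) _ _ _) _.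
  - by move=> s; rewrite /= in_itv /= => /hl /andP[+ _]; rewrite lee_fin.
  - by move=> s; rewrite /= in_itv /= => /hl /andP[_ +]; rewrite lee_fin.
  by rewrite integral_cst //= lebesgue_measure_itv /= lte_fin xy -EFinM.
by move: I0 IL; case: (\int[_]_(_ in _) _)%E => [r| |] //=; rewrite !lee_fin => -> ->.
Qed.

Lemma expR_le_inv1B (R : realType) (y : R) : y < 1 -> expR y <= 1 / (1 - y).
Proof.
move=> y1; have h := expR_ge1Dx (- y).
rewrite -[y]opprK expRN div1r lef_pV2 ?posrE ?expR_gt0 ?subr_gt0 //; lra.
Qed.

Lemma quartic_bound (R : realType) (x y : R) : 0 < x <= 1 / 2 -> 0 <= y <= x ^+ 2 / 32 ->
  (1 + y) * (1 / ((1 - x / 4) ^+ 4 * (1 - y)) - 1) <= x + x ^+ 2.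
Proof.
move=> /andP[x0 x1] /andP[y0 y1].
set p := (1 - x / 4) ^+ 4.
have p0 : 0 < p by apply: exprn_gt0; lra.
have p1 : p <= 1 by apply: exprn_ile1; lra.
have x2 : 0 <= x ^+ 2 <= 1 / 4 by rewrite sqr_ge0 /= expr2; nra.
have y1' : 0 < 1 - y by lra.
set g := 3/8 - 11/16 * x + 81/256 * x^+2 - 15/256 * x^+3 + 1/256 * x^+4.
have pg : p * (1 + x + x^+2) - 1 = x^+2 * g by rewrite /p /g; field.
have g_ge : 1/10 <= g.
  have x3 : x^+3 <= 1/4 * x by rewrite exprS; have := ler_wpM2l (ltW x0) (andP x2).2; lra.
  have x4 : 0 <= x^+4 by apply: exprn_ge0; lra.
  have : 0 <= (1/2 - x) * (719/1024 - 81/256 * (x + 1/2)) by apply: mulr_ge0; lra.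
  rewrite /g expr2; nra.
have py2 : p * y^+2 <= y / 128.
  rewrite expr2; have : p * y <= 1 * (1/128) by apply: ler_pM; lra.
  by move=> h; have := ler_wpM2r y0 h; lra.
have pxy : (x + x^+2) * p * y <= 3/4 * y.
  apply: ler_wpM2r => //; have hx : 0 <= x + x^+2 by lra.
  by have := ler_pM hx (ltW p0) (_ : x + x^+2 <= 3/4) p1; lra.
rewrite -subr_ge0.
have -> : x + x^+2 - (1 + y) * (1 / (p * (1 - y)) - 1)
    = (x^+2 * g - y - p * y^+2 - (x + x^+2) * p * y) / (p * (1 - y)).
  by rewrite -pg; field; apply/andP; split; apply/eqP; lra.
apply: divr_ge0; last by apply: mulr_ge0; apply: ltW.
have : x^+2 * (1/10) <= x^+2 * g by apply: ler_wpM2l; case/andP: x2.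
lra.
Qed.

Section RunPotential.
Variable R : realType.
Variable need : nat -> nat.
Hypothesis need_gt0 : forall j, (0 < need j)%N.

(* A state [(js, r)] lists the pending tasks [js], the first of which has seen
   a current run of [r] empty cells; task [j] needs [need j] empty cells in a row. *)
Definition cell_step (st : seq nat * nat) (disrupted : bool) : seq nat * nat :=
  match st.1 with
  | [::] => ([::], 0%N)
  | j :: js => if disrupted then (j :: js, 0%N)
               else if (need j <= st.2.+1)%N then (js, 0%N) else (j :: js, st.2.+1)
  end.

Definition valid_state (st : seq nat * nat) : bool :=
  if st.1 is j :: _ then (st.2 < need j)%N else true.

(* Expected number of cells used within horizon [H] from cell [o], when cell [k]
   is empty with probability [e k], independently. *)
Fixpoint mean_cells (e : nat -> R) (H o : nat) (st : seq nat * nat) : R :=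
  if H is H'.+1 then
    if st.1 is [::] then 0 else
      1 + e o * mean_cells e H' o.+1 (cell_step st false)
        + (1 - e o) * mean_cells e H' o.+1 (cell_step st true)
  else 0.

(* Expected number of trials to complete a run of [m] successes from a run of
   [r], when successes have probability [1/u]. *)
Definition run_potential (u : R) (m r : nat) : R := u * (u ^+ m - u ^+ r) / (u - 1).

Definition potential (u : R) (st : seq nat * nat) : R :=
  if st.1 is j :: js then
    run_potential u (need j) st.2 + \sum_(j' <- js) run_potential u (need j') 0
  else 0.

Lemma valid_state_step st b : valid_state st -> valid_state (cell_step st b).
Proof.
case: st => [[|j js] r] //=; rewrite /valid_state /cell_step /=.
case: b => /= [|_]; first exact: leq_ltn_trans (leq0n r).
case: ifP => /= [_|]; last by rewrite leqNgt => /negbFE.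
by case: js => // j' _; exact: need_gt0.
Qed.

Variable u : R.
Hypothesis u_gt1 : 1 < u.

Lemma run_potential_ge0 m r : (r <= m)%N -> 0 <= run_potential u m r.
Proof.
move=> rm; rewrite /run_potential; apply: divr_ge0; last by rewrite subr_ge0 ltW.
apply: mulr_ge0; first by apply: ltW; apply: lt_trans u_gt1.
by rewrite subr_ge0 ler_eXn2l.
Qed.

Lemma potential_ge0 st : valid_state st -> 0 <= potential u st.
Proof.
case: st => [[|j js] r] //= ok; rewrite /potential /=.
apply: addr_ge0; first by apply: run_potential_ge0; exact: ltnW.
by apply: sumr_ge0 => k _; apply: run_potential_ge0.
Qed.

Lemma run_potential_step (e : R) m r : 1 / u <= e <= 1 ->
  1 + e * run_potential u m r.+1 + (1 - e) * run_potential u m 0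
  <= run_potential u m r.
Proof.
move=> /andP[e1 e2]; have U1 := u_gt1; rewrite /run_potential.
have u0 : 0 < u - 1 by lra.
set X := u ^+ m; set Y := u ^+ r.
have Y1 : 1 <= Y by rewrite /Y exprn_ege1 // ltW.
rewrite exprS -/Y -subr_ge0.
have h : Y - 1 / u <= e * (u * Y - 1).
  have -> : Y - 1/u = 1/u * (u * Y - 1) by field; lra.
  by apply: ler_wpM2r => //; rewrite subr_ge0; nra.
have -> : u * (X - Y) / (u - 1) - (1 + e * (u * (X - u * Y) / (u - 1))
      + (1 - e) * (u * (X - 1) / (u - 1)))
    = u / (u - 1) * (e * (u * Y - 1) - (Y - 1 / u)).
  by field; apply/andP; split; lra.
by apply: mulr_ge0; [apply: divr_ge0; lra | rewrite subr_ge0].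
Qed.

Lemma potential_step_empty j js r : (r < need j)%N ->
  potential u (cell_step (j :: js, r) false) =
  run_potential u (need j) r.+1 + \sum_(j' <- js) run_potential u (need j') 0.
Proof.
move=> ok; rewrite /cell_step /=.
case: ifP => [le|] /=; last by rewrite /potential.
have -> : need j = r.+1 by apply/eqP; rewrite eqn_leq le ok.
rewrite /run_potential subrr mulr0 mul0r add0r /potential /=.
by case: js => [|j' js] /=; rewrite ?big_nil ?big_cons.
Qed.

Lemma mean_cells_le_potential (e : nat -> R) :
  (forall k, 1 / u <= e k <= 1) ->
  forall H o st, valid_state st -> mean_cells e H o st <= potential u st.
Proof.
move=> he; have U1 := u_gt1.
elim=> [|H IH] o st ok /=; first exact: potential_ge0.
case: st ok => [[|j js] r] ok //=.
have /andP[e1 e2] := he o.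
have e0 : 0 <= e o by apply: le_trans e1; apply: divr_ge0; lra.
have := IH o.+1 _ (valid_state_step true ok).
have := IH o.+1 _ (valid_state_step false ok).
rewrite potential_step_empty // /potential /cell_step /= => hf ht.
set S := \sum_(_ <- _) _.
apply: (@le_trans _ _ (1 + e o * (run_potential u (need j) r.+1 + S)
   + (1 - e o) * (run_potential u (need j) 0 + S))).
  apply: lerD; first by apply: lerD => //; exact: ler_wpM2l.
  by apply: ler_wpM2l => //; rewrite subr_ge0.
have := run_potential_step (need j) r (he o); nra.
Qed.

End RunPotential.

(* With [x = lam c] and [y = lam dl]: [dl u / (u - 1) <= (1 + y) / lam] and
   [u ^+ m <= expR (x + y) <= 1 / ((1 - x/4)^4 (1 - y))], so [quartic_bound] applies. *)
Lemma cell_run_potential_le (R : realType) (lam dl c : R) (m : nat) :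
  0 < lam -> 0 < dl -> 0 < c -> m%:R * dl <= c + dl ->
  lam * c <= 1 / 2 -> lam * dl <= (lam * c) ^+ 2 / 32 ->
  dl * run_potential (expR (lam * dl)) m 0 <= c + lam * c ^+ 2.
Proof.
move=> lam0 dl0 c0 mdl xc yx.
set y := lam * dl in yx *; set x := lam * c in xc yx.
have y0 : 0 < y by apply: mulr_gt0.
have x0 : 0 < x by apply: mulr_gt0.
have y1 : y < 1.
  have : x ^+ 2 <= 1/4 by rewrite expr2; nra.
  lra.
set u := expR y; have u1 : 1 + y <= u := expR_ge1Dx y.
have q0 : 0 < (1 - x / 4) ^+ 4 by apply: exprn_gt0; lra.
have um_le : u ^+ m <= 1 / ((1 - x / 4) ^+ 4 * (1 - y)).
  rewrite /u -expRM_natl.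
  apply: (@le_trans _ _ (expR (x + y))).
    by rewrite ler_expR /x /y mulrCA -mulrDr ler_pM2l.
  have ex : expR x <= (1 / (1 - x / 4)) ^+ 4.
    have -> : expR x = expR (x / 4) ^+ 4 by rewrite -expRM_natl; congr expR; field.
    apply: lerXn2r; rewrite ?nnegrE ?expR_ge0 //; first by rewrite divr_ge0 //; lra.
    by apply: expR_le_inv1B; lra.
  rewrite expRD (le_trans (ler_pM (expR_ge0 _) (expR_ge0 _) ex (expR_le_inv1B y1))) //.
  by rewrite expr_div_n expr1n mulf_div mulr1.
have gap : (1 + y) * (1 / ((1 - x / 4) ^+ 4 * (1 - y)) - 1) <= x + x ^+ 2.
  by apply: quartic_bound; rewrite ?x0 ?xc ?(ltW y0) ?yx.
have ratio : dl * (u / (u - 1)) <= (1 + y) / lam.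
  have -> : (1 + y) / lam = dl * ((1 + y) / y).
    by rewrite /y; field; apply/andP; split; rewrite gt_eqF.
  have um1 : 0 < u - 1 by lra.
  rewrite ler_pM2l // ler_pdivrMr // mulrAC ler_pdivlMr //; nra.
have -> : dl * run_potential u m 0 = dl * (u / (u - 1)) * (u ^+ m - 1).
  by rewrite /run_potential expr0; field; rewrite gt_eqF // subr_gt0; lra.
apply: (le_trans (ler_pM _ _ ratio (lerB um_le (lexx 1)))).
- by apply: mulr_ge0; [exact: ltW | apply: divr_ge0; lra].
- by rewrite subr_ge0 exprn_ege1 //; lra.
have -> : c + lam * c ^+ 2 = (x + x ^+ 2) / lam by rewrite /x; field; rewrite gt_eqF.
by rewrite mulrAC ler_pM2r ?invr_gt0.
Qed.

Section CellsUsed.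
Variables (R : realType) (d : measure_display) (T : measurableType d).
Variable P : probability T R.
Variable need : nat -> nat.
Variable E : nat -> set T.
Variable e : nat -> R.

Definition cyl (S : seq nat) : set T := [set w | forall k, k \in S -> E k w].

Hypothesis cyl_indep : forall S : seq nat, uniq S ->
  measurable (cyl S) /\ P (cyl S) = (\prod_(k <- S) e k)%:E.

Lemma measurable_event k : measurable (E k).
Proof.
have [+ _] := @cyl_indep [:: k] erefl; congr measurable.
apply/seteqP; split => w /=; first by apply; rewrite inE.
by move=> Ew k'; rewrite inE => /eqP->.
Qed.

Lemma cyl_cons o S : cyl (o :: S) = cyl S `&` E o.
Proof.
apply/seteqP; split => w /=.
  move=> h; split; last by apply: h; rewrite inE eqxx.
  by move=> k kS; apply: h; rewrite inE kS orbT.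
by move=> [h1 h2] k; rewrite inE => /orP[/eqP->//|]; exact: h1.
Qed.

(* The same chain along the sample [w]: cell [o] is empty iff [w \in E o]. *)
Fixpoint cells_used (H o : nat) (st : seq nat * nat) (w : T) : R :=
  if H is H'.+1 then
    if st.1 is [::] then 0 else
      1 + \1_(E o) w * cells_used H' o.+1 (cell_step need st false) w
        + (1 - \1_(E o) w) * cells_used H' o.+1 (cell_step need st true) w
  else 0.

Lemma cells_usedS H o st w : cells_used H.+1 o st w =
  if st.1 is [::] then 0 else
  1 + (if w \in E o then cells_used H o.+1 (cell_step need st false) w
       else cells_used H o.+1 (cell_step need st true) w).
Proof.
rewrite /= indicE; case: (w \in E o) => /=; case: st.1 => //= *.
  by rewrite subrr mul0r addr0 mul1r.
by rewrite mul0r addr0 subr0 mul1r.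
Qed.

Lemma cells_used_ge0 H o st w : 0 <= cells_used H o st w.
Proof.
elim: H o st => [|H IH] o st //; rewrite cells_usedS; case: st.1 => // _ _.
by case: ifP => _; apply: addr_ge0.
Qed.

Lemma cells_used_leS H o st w : cells_used H o st w <= cells_used H.+1 o st w.
Proof.
elim: H o st => [|H IH] o st; first by rewrite cells_used_ge0.
rewrite cells_usedS [in leRHS]cells_usedS; case: st.1 => // _ _.
by case: ifP => _; rewrite lerD2l.
Qed.

Lemma cells_used_homo o st w :
  {homo (fun H => cells_used H o st w) : m k / (m <= k)%N >-> m <= k}.
Proof.
apply: homo_leq => [x|y x z|H]; [exact: lexx | exact: le_trans | exact: cells_used_leS].
Qed.

Lemma measurable_cells_used H o st : measurable_fun setT (cells_used H o st).
Proof.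
elim: H o st => [|H IH] o st /=; first exact: measurable_cst.
case: st.1 => [|_ _]; first exact: measurable_cst.
have mE := measurable_indic (measurable_event o) (R := R).
apply: measurable_funD; first apply: measurable_funD.
- exact: measurable_cst.
- exact: measurable_funM.
- by apply: measurable_funM => //; apply: measurable_funB.
Qed.

Local Open Scope ereal_scope.

Lemma integral_cyl_cells_used H o st S : uniq S -> (forall k, k \in S -> (k < o)%N) ->
  \int[P]_(w in cyl S) (cells_used H o st w)%:E
  = ((\prod_(k <- S) e k) * mean_cells need e H o st)%:E.
Proof.
elim: H o st S => [|H IH] o st S uS lS.
  by rewrite /= mulr0 integral0_eq.
case Hst : st.1 => [|j js].
  by rewrite /= Hst mulr0 integral0_eq.
have [mC PC] := cyl_indep uS.
have oS : o \notin S by apply/negP => /lS; rewrite ltnn.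
have uoS : uniq (o :: S) by rewrite /= oS uS.
have [mC1 PC1] := cyl_indep uoS.
have loS k : k \in o :: S -> (k < o.+1)%N by rewrite inE => /orP[/eqP->//|/lS /ltnW].
have lS' k : k \in S -> (k < o.+1)%N by move=> /lS /ltnW.
rewrite cyl_cons in mC1 PC1.
set Ff := cells_used H o.+1 (cell_step need st false).
set Ft := cells_used H o.+1 (cell_step need st true).
have mFf : measurable_fun setT Ff by exact: measurable_cells_used.
have mFt : measurable_fun setT Ft by exact: measurable_cells_used.
have eqE : \int[P]_(w in cyl S `&` E o) (cells_used H.+1 o st w)%:E
    = \int[P]_(w in cyl S `&` E o) (1 + Ff w)%:E.
  by apply: eq_integral => w; rewrite inE => -[_ Ew]; rewrite cells_usedS Hst mem_set.
have eqNE : \int[P]_(w in cyl S `\` E o) (cells_used H.+1 o st w)%:E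
    = \int[P]_(w in cyl S `\` E o) (1 + Ft w)%:E.
  by apply: eq_integral => w; rewrite inE => -[_ Ew]; rewrite cells_usedS Hst memNset.
have mEo := measurable_event o.
have mC2 : measurable (cyl S `\` E o) by exact: measurableD.
rewrite (ge0_integral_setID P mC mEo (measurable_cells_used _ _ _) (cells_used_ge0 _ _ _)).
rewrite eqE eqNE !ge0_integral_1D //; try exact: cells_used_ge0.
have mFt1 : measurable_fun setT (fun w => 1 + Ft w)%R.
  by apply: measurable_funD => //; exact: measurable_cst.
have := ge0_integral_setID P mC mEo mFt1
  (fun w => addr_ge0 ler01 (cells_used_ge0 _ _ _ w)).
rewrite !ge0_integral_1D //; try exact: cells_used_ge0.
rewrite /= PC PC1 -!cyl_cons !IH //; rewrite /= Hst big_cons /=.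
(* The unknown integral over the disrupted branch is recovered from the
   splitting of [1 + Ft] over [cyl S]. *)
set X := (P (cyl S `\` E o) + _).
set p := (\prod_(k <- S) e k)%R.
set vt := mean_cells need e H o.+1 (cell_step need st true).
case: X => [x| |]; rewrite -?EFinD; last by rewrite addeNy.
  move=> [hx]; have -> : x = (p + p * vt - (e o * p + e o * p * vt))%R by rewrite hx; ring.
  by congr EFin; ring.
by rewrite addey.
Qed.

End CellsUsed.

Section TasksEnd.
Local Open Scope ereal_scope.
Variable R : realType.
Variable D : set R.
Variable a : nat -> R.

Lemma task_end_ge c s : (s + c)%:E <= task_end D c s.
Proof. by apply/ereal_infP => _ [u [hu _] <-]; rewrite lee_fin. Qed.

Lemma task_end_le c s s' : (s <= s')%R ->
  (forall x, D x -> ~ (s' < x < s' + c)%R) -> task_end D c s <= (s' + c)%:E.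
Proof.
move=> ss' hD; apply: ge_ereal_inf; exists (s' + c)%R%:E => //.
exists (s' + c)%R => //; split; first by rewrite lerD2r.
by move=> x /hD; rewrite addrK.
Qed.

Definition tasks_end (x : \bar R) (L : seq nat) : \bar R :=
  foldl (fun x j => if x is EFin s then task_end D (a j) s else x) x L.

Lemma seq_endE i n t : seq_end D a i n t = tasks_end t%:E (iota i (n.+1 - i)).
Proof. by []. Qed.

Lemma tasks_end_pinfty L : tasks_end +oo L = +oo.
Proof. by elim: L. Qed.

Lemma tasks_end_ninfty L : tasks_end -oo L = -oo.
Proof. by elim: L. Qed.

Lemma tasks_end_ge L y x : y%:E <= x -> (y + \sum_(j <- L) a j)%:E <= tasks_end x L.
Proof.
elim: L y x => [|j L IH] y x yx; first by rewrite big_nil addr0.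
case: x yx => [s| |] yx //=; last by rewrite tasks_end_pinfty leey.
rewrite big_cons addrA; apply: IH.
by apply: le_trans (task_end_ge _ _); rewrite lee_fin lerD2r.
Qed.

End TasksEnd.

Lemma seq_end_ge (R : realType) (D : set R) (a : nat -> R) (i n : nat) (t : R) :
  ((\sum_(i <= j < n.+1) a j)%:E <= seq_end D a i n t - t%:E)%E.
Proof.
have := tasks_end_ge D a (iota i (n.+1 - i)) (lexx t%:E).
rewrite seq_endE; case: (tasks_end _ _ _ _) => [r| |] //= h.
  by rewrite -EFinB lee_fin; move: h; rewrite lee_fin; lra.
by rewrite leey.
Qed.

Lemma Mexp_ge (R : realType) (d : measure_display) (T : measurableType d)
    (P : probability T R) (D : T -> set R) (a : nat -> R) (i n : nat) (t : R) :
  (forall j, (i <= j <= n)%N -> 0 <= a j) ->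
  ((\sum_(i <= j < n.+1) a j)%:E <= Mexp P D a i n t)%E.
Proof.
move=> a_ge0.
apply: le_trans (ge0_le_integral_nomeas (f := cst _) _ _ (fun w _ => seq_end_ge (D w) a i n t)).
  by rewrite integral_cst //= probability_setT mule1.
by move=> w _; rewrite lee_fin big_nat sumr_ge0.
Qed.

Section SamplePath.
Variables (R : realType) (d : measure_display) (T : measurableType d).
Variable need : nat -> nat.
Variable E : nat -> set T.
Variable a : nat -> R.
Variables (t dl : R) (w : T) (D : set R).
Hypothesis dl_gt0 : 0 < dl.
Hypothesis need_gt0 : forall j, (0 < need j)%N.
Hypothesis need_ge : forall j, a j <= (need j)%:R * dl.
Hypothesis empty_cells : forall k, w \in E k -> forall y, D y ->
  ~ (t + k%:R * dl <= y < t + k.+1%:R * dl).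

Lemma mem_cell y lo hi : lo%:R * dl <= y - t -> y - t < hi.+1%:R * dl ->
  exists2 k, (lo <= k <= hi)%N & t + k%:R * dl <= y < t + k.+1%:R * dl.
Proof.
move=> ylo yhi; have dl0 := dl_gt0.
have ydl0 : 0 <= (y - t) / dl.
  by apply: divr_ge0; [apply: le_trans ylo; apply: mulr_ge0 (ltW dl0) | exact: ltW].
exists (Num.truncn ((y - t) / dl)).
  apply/andP; split; first by rewrite truncn_ge_nat // ler_pdivlMr.
  by rewrite truncn_le_nat // ltr_pdivrMr.
have := truncn_le ((y - t) / dl); rewrite ydl0 ler_pdivlMr // => hl.
have := truncnS_gt ((y - t) / dl); rewrite ltr_pdivrMr // => hu.
by apply/andP; split; lra.
Qed.

Local Open Scope ereal_scope.

Lemma task_end_le_cells j s o r : (r <= o)%N -> (need j <= r.+1)%N ->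
  (s <= t + (o - r)%:R * dl)%R -> (forall k, (o - r <= k <= o)%N -> w \in E k) ->
  task_end D (a j) s <= (t + o.+1%:R * dl)%R%:E.
Proof.
move=> ro nr so cells; have dl0 := dl_gt0.
have ar : (a j <= r.+1%:R * dl)%R.
  by apply: le_trans (need_ge j) _; rewrite ler_pM2r // ler_nat.
apply: le_trans (task_end_le (s' := (t + (o - r)%:R * dl)%R) so _) _.
  move=> y Dy /andP[y1 y2].
  have [k ok hk] : exists2 k, (o - r <= k <= o)%N & (t + k%:R * dl <= y < t + k.+1%:R * dl)%R.
    apply: mem_cell; first lra.
    rewrite natrB // in y2; rewrite !mulrSr; lra.
  exact: (empty_cells (cells k ok) Dy hk).
by move: ar; rewrite lee_fin natrB // !mulrSr => ar; lra.
Qed.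

Lemma tasks_end_le_cells_used H o js r x : (r <= o)%N -> valid_state need (js, r) ->
  x <= (t + (o - r)%:R * dl)%R%:E ->
  (forall k, (o - r <= k < o)%N -> w \in E k) ->
  cells_used R need E H o (js, r) w = H%:R \/
  tasks_end D a x js <= (t + (o%:R + cells_used R need E H o (js, r) w) * dl)%R%:E.
Proof.
have dl0 := dl_gt0.
have le_cell k l : (k <= l)%N -> (t + k%:R * dl <= t + l%:R * dl)%R.
  by move=> kl; rewrite lerD2l ler_pM2r // ler_nat.
elim: H o js r x => [|H IH] o js r x ro ok xo cells; first by left.
case: js ok => [|j js] ok.
  right; rewrite cells_usedS /= addr0; apply: le_trans xo _.
  by rewrite lee_fin le_cell ?leq_subr.
set cu := cells_used R need E H o.+1.
have lift st' (y : \bar R) : cu st' w = H%:R \/ y <= (t + (o.+1%:R + cu st' w) * dl)%R%:E ->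
    (1 + cu st' w)%R = H.+1%:R \/ y <= (t + (o%:R + (1 + cu st' w)) * dl)%R%:E.
  by case=> [->|h]; [left; rewrite mulrS | right; rewrite addrA -mulrSr].
rewrite cells_usedS; case Ew: (w \in E o).
- case: (leqP (need j) r.+1) => [done_j|run_j].
  + have -> : cell_step need (j :: js, r) false = (js, 0%N) by rewrite /cell_step /= done_j.
    case: x xo => [s| |] xo /=; last by right; rewrite tasks_end_ninfty leNye.
      apply: lift; apply: IH; rewrite ?subn0 //.
      * by case: (js) => [|j' ?] //=; exact: need_gt0.
      * apply: (task_end_le_cells (r := r)) => // k /andP[k_lo]; rewrite leq_eqVlt.
        by case/orP => [/eqP->//|ko]; apply: cells; rewrite k_lo.
      * by move=> k /andP[k1 k2]; move: (leq_trans k1 k2); rewrite ltnn.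
    by move: xo; rewrite leye_eq.
  + have -> : cell_step need (j :: js, r) false = (j :: js, r.+1).
      by rewrite /cell_step /= leqNgt run_j.
    apply: lift; apply: IH; rewrite ?subSS //.
    move=> k /andP[k_lo]; rewrite ltnS leq_eqVlt.
    by case/orP => [/eqP->//|ko]; apply: cells; rewrite k_lo.
- apply: lift; apply: IH; rewrite ?subn0 //.
  + exact: need_gt0.
  + by apply: le_trans xo _; rewrite lee_fin le_cell // (leq_trans (leq_subr _ _)).
  + by move=> k /andP[k1 k2]; move: (leq_trans k1 k2); rewrite ltnn.
Qed.

End SamplePath.

Section EmptyCells.
Variables (R : realType) (d : measure_display) (T : measurableType d).
Variable P : probability T R.
Variable D : T -> set R.
Variable lam : R -> R.
Hypothesis NHPP_D : is_NHPP P D lam.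
Variables (t dl : R).
Hypothesis t_ge0 : 0 <= t.
Hypothesis dl_gt0 : 0 < dl.

Definition empty_cell (k : nat) : set T :=
  [set w | count_eq (D w) (t + k%:R * dl) (t + k.+1%:R * dl) 0].

Definition empty_cell_prob (k : nat) : R :=
  expR (- cumint lam (t + k%:R * dl) (t + k.+1%:R * dl)).

Lemma empty_cellP w k : w \in empty_cell k -> forall y, D w y ->
  ~ (t + k%:R * dl <= y < t + k.+1%:R * dl).
Proof.
rewrite inE => -[s [_ s0 hs]] y Dy hy.
by have := (hs y).2 (conj Dy hy); case: s s0 {hs}.
Qed.

Lemma empty_cells_indep (S : seq nat) : uniq S ->
  measurable (cyl empty_cell S) /\
  P (cyl empty_cell S) = (\prod_(k <- S) empty_cell_prob k)%:E.
Proof.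
move=> uS; have dl0 := dl_gt0; have t0 := t_ge0.
have le_cell k l : (k <= l)%N -> t + k%:R * dl <= t + l%:R * dl.
  by move=> kl; rewrite lerD2l ler_pM2r // ler_nat.
have [|j l jl|mE PE] := NHPP_D.2 (size S) (fun j => t + (nth 0%N S j)%:R * dl)
   (fun j => t + (nth 0%N S j).+1%:R * dl) (fun _ => 0%N).
- move=> j; rewrite le_cell // andbT.
  by apply: addr_ge0 => //; apply: mulr_ge0 => //; exact: ltW.
- have : nth 0%N S j != nth 0%N S l by rewrite nth_uniq.
  by rewrite neq_ltn => /orP[h|h]; [left|right]; rewrite le_cell.
have cylE : cyl empty_cell S = \bigcap_(j in [set: 'I_(size S)])
    [set w | count_eq (D w) (t + (nth 0%N S j)%:R * dl) (t + (nth 0%N S j).+1%:R * dl) 0].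
  apply/seteqP; split => w /=; first by move=> h j _; apply: h; rewrite mem_nth.
  move=> h k kS; have := h (Ordinal (etrans (index_mem k S) kS)) I.
  by rewrite /= nth_index.
rewrite cylE; split => //; rewrite PE; congr EFin.
rewrite (big_nth 0%N) big_mkord; apply: eq_bigr => j _.
by rewrite /pois_pmf /empty_cell_prob expr0 mulr1 fact0 divr1.
Qed.

End EmptyCells.

Section UpperBound.
Variables (R : realType) (d : measure_display) (T : measurableType d).
Variable P : probability T R.
Variable D : T -> set R.
Variables (lam : R -> R) (lam_max : R).
Hypothesis NHPP_D : is_NHPP P D lam.
Variables (a : nat -> R) (amin t : R) (i n : nat).
Hypothesis t_ge0 : 0 <= t.
Hypothesis lam_bounds : forall x, t <= x -> 0 <= lam x <= lam_max.
Hypothesis lam_max_gt0 : 0 < lam_max.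
Hypothesis amin_gt0 : 0 < amin.
Hypothesis a_ge : forall j, (i <= j <= n)%N -> amin <= a j.
Hypothesis a_le : forall j, (i <= j <= n)%N -> lam_max * a j <= 1 / 2.

Let tasks := iota i (n.+1 - i).
(* The cell width is chosen so that [cell_run_potential_le] applies to every task. *)
Let dl := lam_max * amin ^+ 2 / 32.
Let need j := (Num.truncn (a j / dl)).+1.
Let u := expR (lam_max * dl).
Let cells H := cells_used R need (empty_cell D t dl) H 0 (tasks, 0%N).
Let bound := \sum_(i <= j < n.+1) (a j + lam_max * a j ^+ 2).

Lemma mem_tasks j : j \in tasks -> (i <= j <= n)%N.
Proof.
rewrite mem_iota => /andP[ij]; rewrite ij /=.
have [ni|in_] := leqP i n.+1; first by rewrite subnKC.
have /eqP-> : (n.+1 - i == 0)%N by rewrite subn_eq0 ltnW.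
by rewrite addn0 ltnNge ij.
Qed.

Let dl_gt0 : 0 < dl.
Proof. by rewrite !mulr_gt0 ?exprn_gt0. Qed.

Let need_ge j : a j <= (need j)%:R * dl.
Proof. by rewrite ltW // -ltr_pdivrMr ?dl_gt0 // truncnS_gt. Qed.

Let cells_indep := empty_cells_indep NHPP_D t_ge0 dl_gt0.

Lemma empty_cell_prob_bounds k : 1 / u <= empty_cell_prob lam t dl k <= 1.
Proof.
have dl0 := dl_gt0; rewrite /empty_cell_prob.
set lo := t + k%:R * dl; set hi := t + k.+1%:R * dl.
have lohi : lo < hi by rewrite ltrD2l ltr_pM2r // ltr_nat.
have hilo : hi - lo = dl by rewrite /hi /lo mulrSr; ring.
have /andP[c0 c1] : 0 <= cumint lam lo hi <= lam_max * dl.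
  rewrite -hilo; apply: cumint_ge0_le => // x /andP[lox _]; apply: lam_bounds.
  by apply: le_trans lox; rewrite lerDl; exact: mulr_ge0 (ler0n _ _) (ltW dl0).
rewrite expR_le1 oppr_le0 c0 andbT.
by rewrite /u div1r -expRN ler_expR lerN2 c1.
Qed.

Lemma potential_tasks_le : dl * potential need u (tasks, 0%N) <= bound.
Proof.
have dl0 := dl_gt0.
have -> : potential need u (tasks, 0%N) = \sum_(j <- tasks) run_potential u (need j) 0.
  by rewrite /potential; case: tasks => [|j js] /=; rewrite ?big_nil ?big_cons.
rewrite mulr_sumr /bound big_seq [leRHS]big_seq; apply: ler_sum => j /mem_tasks jr.
have aj0 : 0 < a j by apply: lt_le_trans (a_ge jr).
apply: cell_run_potential_le; rewrite ?a_le //.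
  rewrite mulrSr mulrDl mul1r lerD2r -ler_pdivlMr // truncn_le.
  by rewrite divr_ge0 ?ltW.
have -> : lam_max * dl = (lam_max * amin) ^+ 2 / 32 by rewrite /dl; field.
have lam0 := ltW lam_max_gt0.
rewrite ler_pM2r //; apply: lerXn2r; rewrite ?nnegrE ?mulr_ge0 ?(ltW amin_gt0) ?(ltW aj0) //.
by rewrite ler_pM2l // a_ge.
Qed.

Local Open Scope ereal_scope.

Lemma integral_cells_le H : \int[P]_w (dl * cells H w)%:E <= bound%:E.
Proof.
have dl0 := dl_gt0.
have mcells : measurable_fun setT (cells H).
  exact: measurable_cells_used cells_indep _ _ _.
under eq_integral do rewrite EFinM.
rewrite ge0_integralZl_EFin //; last 3 first.
- by move=> w _; rewrite lee_fin cells_used_ge0.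
- exact/measurable_EFinP.
- exact: ltW.
have cylT : cyl (empty_cell D t dl) [::] = setT by apply/seteqP; split => w // _ k.
rewrite -cylT (integral_cyl_cells_used _ cells_indep) //.
rewrite big_nil mul1r -EFinM lee_fin (le_trans _ potential_tasks_le) //.
rewrite ler_pM2l //; apply: mean_cells_le_potential => //.
- by rewrite /u expR_gt1 mulr_gt0.
- exact: empty_cell_prob_bounds.
- by rewrite /valid_state; case: tasks.
Qed.

Lemma seq_end_le_lim_cells w :
  seq_end (D w) a i n t - t%:E <= limn (fun H => (dl * cells H w)%:E).
Proof.
have dl0 := dl_gt0.
set g := fun H => _.
have g_nd : {homo g : m k / (m <= k)%N >-> m <= k}.
  by move=> m k mk; rewrite lee_fin ler_wpM2l ?(ltW dl0) ?cells_used_homo.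
have g_le_lim H : g H <= limn g.
  rewrite (cvg_lim _ (ereal_nondecreasing_cvgn g_nd)) //.
  by apply: ereal_sup_ubound; exists H.
case hlim: (limn g) => [r| |]; last 2 first.
- by rewrite leey.
- by have := g_le_lim 0%N; rewrite hlim leeNy_eq.
pose H := (Num.truncn (r / dl)).+1.
have valid0 : valid_state need (tasks, 0%N) by rewrite /valid_state; case: tasks.
have start : t%:E <= (t + (0 - 0)%:R * dl)%:E by rewrite subn0 mul0r addr0.
have no_cells k : (0 - 0 <= k < 0)%N -> w \in empty_cell D t dl k by rewrite ltn0 andbF.
have [cellsH|endH] := tasks_end_le_cells_used dl0 (fun j => ltn0Sn _) need_ge
  (@empty_cellP _ _ _ D t dl w) H (leqnn 0) valid0 start no_cells.
- have := g_le_lim H; rewrite hlim /g /cells cellsH lee_fin mulrC -ler_pdivlMr //.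
  by rewrite leNgt truncnS_gt.
- have := g_le_lim H; rewrite hlim; apply: le_trans.
  rewrite seq_endE /g; move: endH; case: (tasks_end _ _ _ _) => [s| |] // endH.
    by rewrite /cells -EFinB lee_fin; rewrite lee_fin add0r in endH; lra.
  by rewrite addNye leNye.
Qed.

Lemma Mexp_le : Mexp P D a i n t <=
  (\sum_(i <= j < n.+1) a j + lam_max * \sum_(i <= j < n.+1) a j ^+ 2)%:E.
Proof.
have dl0 := dl_gt0.
rewrite mulr_sumr -big_split -/bound.
have a_ge0 j : (i <= j <= n)%N -> (0 <= a j)%R.
  by move=> jr; apply: le_trans (ltW amin_gt0) (a_ge jr).
apply: (le_trans (ge0_le_integral_nomeas _ _ (fun w _ => seq_end_le_lim_cells w))).
  move=> w _; apply: le_trans (seq_end_ge (D w) a i n t).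
  by rewrite lee_fin big_nat sumr_ge0.
rewrite monotone_convergence //.
- apply: lime_le; last exact: nearW integral_cells_le.
  apply: ereal_nondecreasing_is_cvgn => m k mk.
  apply: ge0_le_integral_nomeas => w _.
    by rewrite lee_fin mulr_ge0 ?(ltW dl0) ?cells_used_ge0.
  by rewrite lee_fin ler_wpM2l ?(ltW dl0) ?cells_used_homo.
- move=> H; apply/measurable_EFinP; apply: measurable_funM; first exact: measurable_cst.
  exact: measurable_cells_used cells_indep _ _ _.
- by move=> H w _; rewrite lee_fin mulr_ge0 ?(ltW dl0) ?cells_used_ge0.
- by move=> w _ m k mk; rewrite lee_fin ler_wpM2l ?(ltW dl0) ?cells_used_homo.
Qed.
End UpperBound.

Lemma sum_sqr_le_half (R : realType) (c : R) (a : nat -> R) (i n : nat) :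
  (forall j, (i <= j <= n)%N -> 0 <= a j /\ c * a j <= 1 / 2) ->
  c * \sum_(i <= j < n.+1) a j ^+ 2 <= 1 / 2 * \sum_(i <= j < n.+1) a j.
Proof.
move=> ha; rewrite !mulr_sumr !big_nat; apply: ler_sum => j /ha[aj0 caj].
by rewrite expr2 mulrA ler_wpM2r.
Qed.

Lemma increasing_bounds (R : realType) (a : nat -> R) (n : nat) :
  (forall j, (1 <= j < n)%N -> a j < a j.+1) ->
  forall j, (1 <= j <= n)%N -> a 1%N <= a j <= a n.
Proof.
move=> a_lt; pose I := [pred j | (1 <= j <= n)%N].
have a_le : {in I &, {homo a : j k / (j <= k)%N >-> j <= k}}.
  apply: homo_leq_in => [x|y x z|j k|j]; [exact: lexx | exact: le_trans | |].
    rewrite !inE => /andP[j1 _] /andP[_ kn] m /andP[jm mk].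
    by rewrite inE (leq_trans j1 (ltnW jm)) (leq_trans (ltnW mk) kn).
  by rewrite !inE => /andP[j1 _] /andP[_ jn]; rewrite ltW // a_lt // j1.
move=> j jI; have /andP[j1 jn] := jI.
by rewrite !a_le // !inE ?leqnn ?(leq_trans j1 jn).
Qed.

Theorem lemma4 (R : realType) (d : measure_display) (T : measurableType d)
    (P : probability T R) (D : T -> set R)
    (n : nat) (a : nat -> R) (lbar : R) (f : R -> R) :
  0 < a 1%N ->
  (forall j, (1 <= j < n)%N -> a j < a j.+1) ->
  0 < lbar ->
  (forall t, 0 < t -> derivable f t 1) ->
  f x @[x --> 0^'+] --> f 0 ->
  (forall t, 0 <= t -> 0 < f t) ->
  0 < inf (f @` `[0, +oo[%classic) ->
  has_ubound (f @` `[0, +oo[%classic) ->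
  lbar <= 1 / (2 * sup (f @` `[0, +oo[%classic) * a n) ->
  is_NHPP P D (fun t => lbar * f t) ->
  forall (t : R) (i : nat), 0 <= t -> (1 <= i <= n)%N ->
    let A := \sum_(i <= j < n.+1) a j in
    [/\ (A%:E <= Mexp P D a i n t)%E,
        (Mexp P D a i n t <=
          (A + lbar * sup (f @` `[0, +oo[%classic)
                 * \sum_(i <= j < n.+1) a j ^+ 2)%:E)%E &
        (Mexp P D a i n t <= (3 / 2 * A)%:E)%E].
Proof.
move=> a1_gt0 a_lt lbar_gt0 _ _ f_gt0 _ f_ub lbar_le NHPP_D t i t_ge0 /andP[i1 i_n] A.
set fsup := sup _ in lbar_le *.
have f_le_sup x : 0 <= x -> f x <= fsup.
  move=> x0; apply: sup_upper_bound; last by exists x; rewrite //= in_itv /= x0.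
  by split => //; exists (f 0), 0 => //=; rewrite in_itv /= lexx.
have fsup_gt0 : 0 < fsup := lt_le_trans (f_gt0 0 (lexx 0)) (f_le_sup 0 (lexx 0)).
have a_in j : (i <= j <= n)%N -> a 1%N <= a j <= a n.
  by case/andP=> ij jn; apply: increasing_bounds; rewrite ?jn ?(leq_trans i1 ij).
have a1_le j (jr : (i <= j <= n)%N) : a 1%N <= a j := (andP (a_in j jr)).1.
have a_ge0 j (jr : (i <= j <= n)%N) : 0 <= a j := ltW (lt_le_trans a1_gt0 (a1_le j jr)).
have an_gt0 : 0 < a n by apply: lt_le_trans a1_gt0 (a1_le n _); rewrite i_n leqnn.
have lam_a j : (i <= j <= n)%N -> lbar * fsup * a j <= 1 / 2.
  move=> /a_in /andP[_ ajn]; apply: le_trans (_ : lbar * fsup * a n <= 1 / 2).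
    by rewrite ler_pM2l ?mulr_gt0.
  by move: lbar_le; rewrite ler_pdivlMr ?mulr_gt0 //; lra.
have lam_bounds x : t <= x -> 0 <= lbar * f x <= lbar * fsup.
  move=> tx; have x0 := le_trans t_ge0 tx.
  by rewrite mulr_ge0 ?(ltW lbar_gt0) ?(ltW (f_gt0 _ x0)) // ler_pM2l // f_le_sup.
have Mle := Mexp_le NHPP_D t_ge0 lam_bounds (mulr_gt0 lbar_gt0 fsup_gt0) a1_gt0 a1_le lam_a.
have half := sum_sqr_le_half (fun j jr => conj (a_ge0 j jr) (lam_a j jr)).
split => //; first exact: Mexp_ge.
by apply: le_trans Mle _; rewrite -/A in half *; rewrite lee_fin; lra.
Qed.
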